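(* Let $Q_1=\{q_1<q_2<q_3<\cdots\}$ and $Q_2=\{v_1<v_2<v_3<\cdots\}$ be sets of prime powers (greater than 1), the elements within each set being pairwise coprime. Let $S_1$ be the set of integers $q_1^{e_1}\cdots q_s^{e_s}$ with $s\ge0$, $q_i\in Q_1$, $e_i\in\mathbb Z_{\ge0}$, and $S_2$ likewise with $Q_2$. Let $\pi_i(x)=\#\{q\in Q_i:q\le x\}$. Let $h:\mathbb N\to\mathbb R_{\ge0}$ be non-increasing and put $V_i(x)=\sum_{n\in S_i,\ n\le x}h(n)$ for $i=1,2$. Then: (a) if $\pi_1(x)\ge\pi_2(x)$ for all $x\ge0$, then $V_1(x)\ge V_2(x)$ for all $x\ge0$; (b) if $x_0$ is a real number and $\pi_1(x)\ge\pi_2(x)$ for all $x\le x_0$, then $V_1(x)\ge V_2(x)$ for all $x\le x_0$. *)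

From HB Require Import structures.
From mathcomp Require Import all_boot all_order all_algebra.
From mathcomp Require Import boolp reals.
Set Implicit Arguments. Unset Strict Implicit. Unset Printing Implicit Defensive.
Import Order.TTheory GRing.Theory Num.Theory.
Local Open Scope ring_scope.

Definition prime_power (q : nat) : Prop :=
  exists p k : nat, prime p /\ (0 < k)%N /\ q = (p ^ k)%N.

Definition coprime_prime_power_set (Q : nat -> bool) : Prop :=
  (forall q, Q q -> prime_power q) /\
  (forall q q', Q q -> Q q' -> q <> q' -> coprime q q').

Definition inS (Q : nat -> bool) (n : nat) : Prop :=
  exists s : seq nat, all Q s /\ n = (\prod_(q <- s) q)%N.

Definition piQ {R : realType} (Q : nat -> bool) (x : R) : nat :=
  (\sum_(n < (Num.truncn x).+1 | Q n && (n%:R <= x)%R) 1)%N.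

Definition VQ {R : realType} (Q : nat -> bool) (h : nat -> R) (x : R) : R :=
  \sum_(n < (Num.truncn x).+1 | `[< inS Q n >] && (n%:R <= x)) h n.

From HB Require Import structures.
From mathcomp Require Import all_boot all_order all_algebra.
From mathcomp Require Import boolp reals.
Import Order.TTheory GRing.Theory Num.Theory.

(* Since pi_1 >= pi_2, the k-th element u_k of Q_1 is at most the k-th element
   v_k of Q_2.  Coprimality makes the factorisation n = prod_k v_k^(e_k) of
   n in S_2 unique, so phi(n) := prod_k u_k^(e_k) is an injection of S_2 into
   S_1 with phi(n) <= n.  As h is non-increasing and non-negative,
   V_2(x) = sum h(n) <= sum h(phi n) <= V_1(x).  Only the elements of Q_1 and
   Q_2 below x are involved, which gives the local version (b). *)

Lemma prime_power_logn_gt0 q : prime_power q -> 0 < logn (pdiv q) q.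
Proof. by case=> p [[|k] [p_pr [//= _ ->]]]; rewrite pdiv_pfactor // pfactorK. Qed.

Lemma prime_power_gt1 q : prime_power q -> 1 < q.
Proof.
by case=> p [k [p_pr [k_gt0 ->]]]; rewrite -{1}(expn0 p) ltn_exp2l ?prime_gt1.
Qed.

Lemma logn_prod p (I : Type) (r : seq I) (P : pred I) (F : I -> nat) :
  (forall i, P i -> 0 < F i) ->
  logn p (\prod_(i <- r | P i) F i) = \sum_(i <- r | P i) logn p (F i).
Proof.
move=> F_gt0; elim: r => [|i r IHr]; first by rewrite !big_nil logn1.
rewrite !big_cons; case: ifP => // Pi.
rewrite lognM ?F_gt0 ?IHr //.
by rewrite big_mkcond prodn_gt0 // => j; case: ifP => // /F_gt0.
Qed.

(* The exponent of the prime power q in n, when n is a product of members of a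
   coprime set containing q. *)
Definition pplogn (q n : nat) : nat := logn (pdiv q) n %/ logn (pdiv q) q.

Lemma inS1 (Q : nat -> bool) : inS Q 1.
Proof. by exists [::]; rewrite big_nil. Qed.

Lemma inS_mul (Q : nat -> bool) a b : inS Q a -> inS Q b -> inS Q (a * b).
Proof.
by case=> [s [Qs ->]] [t [Qt ->]]; exists (s ++ t); rewrite all_cat Qs Qt big_cat.
Qed.

Lemma inS_exp (Q : nat -> bool) q e : Q q -> inS Q (q ^ e).
Proof.
move=> Qq; elim: e => [|e IHe]; first exact: inS1.
by rewrite expnS; apply: inS_mul IHe; exists [:: q]; rewrite /= Qq big_seq1.
Qed.

Section CoprimePrimePowerSet.

Context {Q : nat -> bool}.
Hypothesis HQ : coprime_prime_power_set Q.

Lemma member_gt0 q : Q q -> 0 < q.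
Proof. by move=> Qq; exact/ltnW/prime_power_gt1/HQ.1. Qed.

Lemma logn_pdiv_member q v :
  Q q -> Q v -> logn (pdiv v) q = if q == v then logn (pdiv v) v else 0.
Proof.
move=> Qq Qv; case: eqP => [-> // | neq_qv].
apply: logn_coprime.
by apply: coprime_dvdl (HQ.2 _ _ Qv Qq (nesym neq_qv)); apply: pdiv_dvd.
Qed.

Lemma inS_gt0 n : inS Q n -> 0 < n.
Proof.
case=> s [Qs ->]; rewrite big_seq_cond prodn_cond_gt0 // => q /andP[q_s _].
exact: member_gt0 (allP Qs q q_s).
Qed.

Lemma pplognMl q v n :
  Q q -> Q v -> 0 < n -> pplogn v (q * n) = (q == v) + pplogn v n.
Proof.
move=> Qq Qv n_gt0; rewrite /pplogn lognM ?n_gt0 ?member_gt0 //.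
rewrite logn_pdiv_member //; case: eqP => [_ | _]; last by rewrite add0n.
by rewrite divnDl ?dvdnn // divnn (prime_power_logn_gt0 _ (HQ.1 _ Qv)).
Qed.

Lemma inS_factor {M n} :
  inS Q n -> n < M -> n = \prod_(i < M | Q i) i ^ pplogn i n.
Proof.
case=> s [Qs ->]; elim: s Qs => [|q s IHs] /=.
  by move=> _ _; rewrite big_nil big1 // => i _; rewrite /pplogn logn1 div0n.
case/andP=> Qq Qs; rewrite big_cons => lt_M.
have Ss : inS Q (\prod_(r <- s) r) by exists s.
have lt_qM : q < M by apply: leq_ltn_trans lt_M; rewrite leq_pmulr ?inS_gt0.
under [RHS]eq_bigr => i Qi do rewrite pplognMl ?inS_gt0 // expnD.
rewrite big_split /= -IHs //; last first.
  by apply: leq_ltn_trans lt_M; rewrite leq_pmull ?member_gt0.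
congr (_ * _); rewrite (bigD1 (Ordinal lt_qM)) //= eqxx big1 ?muln1 // => i.
by case/andP=> _ /eqP neq_iq; case: eqP => // eq_qi; case: neq_iq; apply: val_inj.
Qed.

Lemma pplogn_prod (I : finType) (P : pred I) (g E : I -> nat) j :
  (forall i, P i -> Q (g i)) -> {in P &, injective g} -> P j ->
  pplogn (g j) (\prod_(i | P i) g i ^ E i) = E j.
Proof.
move=> Qg g_inj Pj; have k_gt0 := prime_power_logn_gt0 _ (HQ.1 _ (Qg j Pj)).
rewrite /pplogn logn_prod => [|i Pi]; last by rewrite expn_gt0 member_gt0 ?Qg.
rewrite (bigD1 j) //= big1 ?addn0 => [|i /andP[Pi neq_ij]].
  by rewrite lognX logn_pdiv_member ?Qg // eqxx mulnK.
rewrite lognX logn_pdiv_member ?Qg //; case: eqP => [/g_inj eq_ij | _].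
  by rewrite eq_ij ?eqxx in neq_ij.
by rewrite muln0.
Qed.

End CoprimePrimePowerSet.

Definition count_upto (Q : nat -> bool) m := count Q (iota 0 m.+1).

Section CountUpto.

Variable Q : nat -> bool.

Lemma count_upto0 : count_upto Q 0 = Q 0.
Proof. by rewrite /count_upto /= addn0. Qed.

Lemma count_uptoS m : count_upto Q m.+1 = count_upto Q m + Q m.+1.
Proof. by rewrite /count_upto -addn1 iotaD count_cat /= addn0. Qed.

Lemma count_upto_homo : {homo count_upto Q : m n / m <= n}.
Proof.
apply: homo_leq => [//|n m p|m]; first exact: leq_trans.
by rewrite count_uptoS leq_addr.
Qed.

Lemma count_upto_lt {m n} : m < n -> Q n -> count_upto Q m < count_upto Q n.
Proof.
by case: n => // n le_mn Qn; rewrite count_uptoS Qn addn1 ltnS count_upto_homo.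
Qed.

Lemma count_upto_gt0 {v} : Q v -> 0 < count_upto Q v.
Proof. by case: v => [|v] Qv; rewrite ?count_upto0 ?count_uptoS Qv ?addn1. Qed.

Lemma count_upto_inj : {in Q &, injective (count_upto Q)}.
Proof.
move=> v w Qv Qw eq_cnt; case: (ltngtP v w) => // [lt_vw | lt_wv].
  by have := count_upto_lt lt_vw Qw; rewrite eq_cnt ltnn.
by have := count_upto_lt lt_wv Qv; rewrite eq_cnt ltnn.
Qed.

Lemma count_upto_attained v k :
  0 < k <= count_upto Q v -> exists2 u, Q u && (u <= v) & count_upto Q u = k.
Proof.
elim: v => [|v IHv] /andP[k_gt0 le_k].
  move: le_k; rewrite count_upto0; case Q0: (Q 0) => /= le_k.
    by case: k k_gt0 le_k => [|[|]] // _ _; exists 0; rewrite ?count_upto0 Q0.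
  by case: k k_gt0 le_k.
have [le_k' | lt_k'] := leqP k (count_upto Q v).
  have [u /andP[Qu le_uv] <-] := IHv (introT andP (conj k_gt0 le_k')).
  by exists u; rewrite ?Qu ?leqW.
move: le_k; rewrite count_uptoS; case Qv1: (Q v.+1) => le_k.
  exists v.+1; first by rewrite Qv1 leqnn.
  rewrite count_uptoS Qv1 addn1.
  by apply/eqP; rewrite eqn_leq lt_k' -addn1.
by rewrite addn0 leqNgt lt_k' in le_k.
Qed.

End CountUpto.

Lemma piQ_nat (R : realType) (Q : nat -> bool) m : piQ Q (m%:R : R) = count_upto Q m.
Proof.
rewrite /piQ natrK (eq_bigl (fun n : 'I_m.+1 => Q n)) => [|n]; last first.
  by rewrite ler_nat -ltnS ltn_ord andbT.
by rewrite -(big_mkord Q (fun=> 1%N)) sum1_count.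
Qed.

(* The member of Q1 with the same rank as v in Q2, searched among 0..v;
   defaults to v itself if there is none. *)
Definition rank_match (Q1 Q2 : nat -> bool) (v : nat) : nat :=
  if [pick u : 'I_v.+1 | Q1 u && (count_upto Q1 u == count_upto Q2 v)] is Some u
  then val u else v.

Lemma rank_matchP {Q1 Q2 : nat -> bool} {v} :
  Q2 v -> count_upto Q2 v <= count_upto Q1 v ->
  [/\ Q1 (rank_match Q1 Q2 v), rank_match Q1 Q2 v <= v
    & count_upto Q1 (rank_match Q1 Q2 v) = count_upto Q2 v].
Proof.
move=> Q2v le_cnt; rewrite /rank_match.
case: pickP => [u /andP[Q1u /eqP eq_cnt] | no_u].
  by split; rewrite // -ltnS ltn_ord.
have /(count_upto_attained Q1)[u /andP[Q1u le_uv] eq_cnt] :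
    0 < count_upto Q2 v <= count_upto Q1 v by rewrite le_cnt (count_upto_gt0 Q2 Q2v).
by have := no_u (Ordinal (le_uv : u < v.+1)); rewrite /= Q1u eq_cnt eqxx.
Qed.

Lemma ler_sum_inj {R : numDomainType} {I J : finType} {P : pred I} {P' : pred J}
    (t : I -> J) {F : I -> R} {G : J -> R} :
  {in P &, injective t} -> (forall i, P i -> P' (t i)) ->
  (forall i, P i -> F i <= G (t i))%R -> (forall j, 0 <= G j)%R ->
  (\sum_(i | P i) F i <= \sum_(j | P' j) G j)%R.
Proof.
move=> t_inj tPP' le_FG G_ge0; apply: (le_trans (ler_sum _ le_FG)).
rewrite [leLHS](eq_bigl (mem P)) // -big_imset //=.
rewrite [leLHS]big_mkcond [leRHS]big_mkcond.
apply: ler_sum => j _; case: ifP => [/imsetP[i Pi ->] | _]; first by rewrite tPP'.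
by case: ifP.
Qed.

Section Transfer.

Variables (Q1 Q2 : nat -> bool) (N : nat).
Hypotheses (HQ1 : coprime_prime_power_set Q1) (HQ2 : coprime_prime_power_set Q2).
Hypothesis le_count : forall v, v < N -> count_upto Q2 v <= count_upto Q1 v.

Lemma rank_match_Q1 (i : 'I_N) : Q2 i -> Q1 (rank_match Q1 Q2 i).
Proof. by move=> Q2i; have [] := rank_matchP Q2i (le_count i (ltn_ord i)). Qed.

Lemma rank_match_le (i : 'I_N) : Q2 i -> rank_match Q1 Q2 i <= i.
Proof. by move=> Q2i; have [] := rank_matchP Q2i (le_count i (ltn_ord i)). Qed.

Lemma rank_match_inj :
  {in Q2 \o val &, injective (fun i : 'I_N => rank_match Q1 Q2 i)}.
Proof.
move=> i j Q2i Q2j /= eq_match; apply/val_inj/(count_upto_inj Q2 _ _ Q2i Q2j).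
have [_ _ <-] := rank_matchP Q2i (le_count i (ltn_ord i)).
by have [_ _ <-] := rank_matchP Q2j (le_count j (ltn_ord j)); rewrite eq_match.
Qed.

Definition transfer n := \prod_(i < N | Q2 i) rank_match Q1 Q2 i ^ pplogn i n.

Lemma inS_transfer n : inS Q1 (transfer n).
Proof.
apply: big_ind => [||i Q2i]; [exact: inS1 | exact: inS_mul |].
exact/inS_exp/rank_match_Q1.
Qed.

Lemma transfer_le {n} : inS Q2 n -> n < N -> transfer n <= n.
Proof.
move=> S2n lt_nN; rewrite [leqRHS](inS_factor HQ2 S2n lt_nN).
apply: leq_prod => i Q2i.
by case: (pplogn i n) => // e; rewrite leq_exp2r ?rank_match_le.
Qed.

Lemma pplogn_transfer n {i : 'I_N} :
  Q2 i -> pplogn (rank_match Q1 Q2 i) (transfer n) = pplogn i n.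
Proof.
by apply: (pplogn_prod HQ1) => [j|]; [apply: rank_match_Q1 | apply: rank_match_inj].
Qed.

Lemma transfer_inj {n n'} :
  inS Q2 n -> inS Q2 n' -> n < N -> n' < N -> transfer n = transfer n' -> n = n'.
Proof.
move=> S2n S2n' lt_nN lt_n'N eq_transfer.
rewrite (inS_factor HQ2 S2n lt_nN) (inS_factor HQ2 S2n' lt_n'N).
apply: eq_bigr => i Q2i.
by rewrite -(pplogn_transfer n Q2i) eq_transfer pplogn_transfer.
Qed.

Lemma ler_sum_inS (R : numDomainType) (h : nat -> R) :
  (forall n, 0 <= h n)%R -> (forall m n, m <= n -> (h n <= h m)%R) ->
  (\sum_(n < N | `[< inS Q2 n >]) h n <= \sum_(n < N | `[< inS Q1 n >]) h n)%R.
Proof.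
move=> h_ge0 h_noninc.
pose t (i : 'I_N) : 'I_N := insubd i (transfer i).
have tE (i : 'I_N) : inS Q2 i -> t i = transfer i :> nat.
  by move=> S2i; rewrite insubdK // -topredE /= (leq_ltn_trans (transfer_le S2i _)).
apply: (ler_sum_inj t) => //
  [i j /asboolP S2i /asboolP S2j eq_t | i /asboolP S2i | i /asboolP S2i].
- by apply/val_inj/(transfer_inj S2i S2j); rewrite -?tE ?eq_t.
- by apply/asboolP; rewrite tE //; apply: inS_transfer.
- by apply: h_noninc; rewrite tE //; apply: transfer_le.
Qed.

End Transfer.

Local Open Scope ring_scope.

Lemma VQ_lt0 (R : realType) (Q : nat -> bool) (h : nat -> R) x :
  x < 0 -> VQ Q h x = 0.
Proof.
move=> x_lt0; rewrite /VQ big1 // => n /andP[_ le_nx].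
by have := lt_le_trans x_lt0 (le_trans (ler0n _ n) le_nx); rewrite ltxx.
Qed.

Lemma VQE (R : realType) (Q : nat -> bool) (h : nat -> R) x : 0 <= x ->
  VQ Q h x = \sum_(n < (Num.truncn x).+1 | `[< inS Q n >]) h n.
Proof.
move=> x_ge0; apply: eq_bigl => n.
by rewrite -truncn_ge_nat // -ltnS ltn_ord andbT.
Qed.

Lemma ler_VQ (R : realType) (Q1 Q2 : nat -> bool) (h : nat -> R) x :
  coprime_prime_power_set Q1 -> coprime_prime_power_set Q2 ->
  (forall n, 0 <= h n) -> (forall m n, (m <= n)%N -> h n <= h m) ->
  (forall m, m%:R <= x -> (count_upto Q2 m <= count_upto Q1 m)%N) ->
  VQ Q2 h x <= VQ Q1 h x.
Proof.
move=> HQ1 HQ2 h_ge0 h_noninc le_count.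
have [x_lt0 | x_ge0] := ltP x 0; first by rewrite !VQ_lt0.
rewrite !VQE //; apply: ler_sum_inS => // m.
by rewrite ltnS truncn_ge_nat //; apply: le_count.
Qed.

Theorem lemma11 (R : realType) (Q1 Q2 : nat -> bool) (h : nat -> R)
  (HQ1 : coprime_prime_power_set Q1) (HQ2 : coprime_prime_power_set Q2)
  (h_ge0 : forall n, 0 <= h n)
  (h_noninc : forall m n, (m <= n)%N -> h n <= h m) :
  ((forall x : R, 0 <= x -> (piQ Q2 x <= piQ Q1 x)%N) ->
     forall x : R, 0 <= x -> VQ Q2 h x <= VQ Q1 h x) /\
  (forall x0 : R,
     (forall x : R, x <= x0 -> (piQ Q2 x <= piQ Q1 x)%N) ->
     forall x : R, x <= x0 -> VQ Q2 h x <= VQ Q1 h x).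
Proof.
split=> [le_pi x _ | x0 le_pi x le_x]; apply: ler_VQ => // m le_m;
  rewrite -!(piQ_nat R); apply: le_pi => //.
exact: le_trans le_x.
Qed.
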